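(* Let $v=(1/N,\dots,1/N)$ be the center of $\Delta$. Then $v$ is a linearly stable equilibrium if $\alpha<(N-1)/(N-2)$, and a linearly unstable equilibrium if $\alpha>(N-1)/(N-2)$.
   Context: Let $N\ge3$, $\alpha>1$, and $A_{i,j}=1-\delta_{i,j}$ for $i,j\le N$. Let $\Delta=\{v\in\mathbb R_+^N:\sum_iv_i=1,\ v_i\le3/4\ \forall i\}$. For $v$ with nonnegative coordinates let $v^\alpha=(v_i^\alpha)_i$, $H(v)=\sum_{i\neq j}v_i^\alpha v_j^\alpha$, $\pi_i(v)=v_i^\alpha(Av^\alpha)_i/H(v)$, and on $\Delta$ let $F(v)=-v+\pi(v)$. An equilibrium is $v\in\Delta$ with $F(v)=0$. With $DF(v)$ the differential at $v$ of $v\mapsto-v+\pi(v)$ acting on $\{x:\sum_ix_i=0\}$, an equilibrium is linearly stable if all eigenvalues of $DF(v)$ have negative real parts and linearly unstable if some eigenvalue has positive real part. *)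

From HB Require Import structures.
From mathcomp Require Import all_boot all_order all_algebra.
From mathcomp Require Import all_classical all_reals all_analysis.
Set Implicit Arguments. Unset Strict Implicit. Unset Printing Implicit Defensive.
Import Order.TTheory GRing.Theory Num.Theory.
Import numFieldNormedType.Exports.
Local Open Scope ring_scope.

Section Defs.
Variables (R : realType) (N : nat) (alpha : R).

Definition Amat : 'M[R]_N := \matrix_(i, j) (if i == j then 0 else 1).

Definition vpow (v : 'rV[R]_N) : 'rV[R]_N := \row_i (v ord0 i `^ alpha).

Definition Hf (v : 'rV[R]_N) : R :=
  \sum_(i < N) \sum_(j < N | j != i) (vpow v ord0 i) * (vpow v ord0 j).

Definition Avpow (v : 'rV[R]_N) (i : 'I_N) : R :=
  \sum_(j < N) Amat i j * vpow v ord0 j.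

Definition piv (v : 'rV[R]_N) : 'rV[R]_N :=
  \row_i (vpow v ord0 i * Avpow v i / Hf v).

Definition Fv (v : 'rV[R]_N) : 'rV[R]_N := - v + piv v.

Definition Delta : set 'rV[R]_N :=
  [set v | (forall i, 0 <= v ord0 i) /\ \sum_(i < N) v ord0 i = 1
           /\ (forall i, v ord0 i <= 3 / 4)].

Definition equilibrium (v : 'rV[R]_N) : Prop := Delta v /\ Fv v = 0.

Definition tangent (x : 'rV[R]_N) : Prop := \sum_(i < N) x ord0 i = 0.

(* lambda = a + i b is a (complex) eigenvalue of the real linear map L acting
   on the tangent space: there is a nonzero z = x + i y in the complexified
   tangent space with L z = lambda z, i.e. L x = a x - b y, L y = b x + a y. *)
Definition eigenvalue_tangent (L : 'rV[R]_N -> 'rV[R]_N) (a b : R) : Prop :=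
  exists x y : 'rV[R]_N, tangent x /\ tangent y /\ (x != 0 \/ y != 0) /\
    L x = a *: x - b *: y /\ L y = b *: x + a *: y.

Definition linearly_stable (v : 'rV[R]_N) : Prop :=
  equilibrium v /\ differentiable Fv v /\
  (forall a b, eigenvalue_tangent ('d Fv v) a b -> a < 0).

Definition linearly_unstable (v : 'rV[R]_N) : Prop :=
  equilibrium v /\ differentiable Fv v /\
  (exists a b, eigenvalue_tangent ('d Fv v) a b /\ 0 < a).

Definition simplex_center : 'rV[R]_N := const_mx (N%:R^-1).
End Defs.

From HB Require Import structures.
From mathcomp Require Import all_boot all_order all_algebra.
From mathcomp Require Import all_classical all_reals all_analysis.
From mathcomp Require Import ring lra.
Import Order.TTheory GRing.Theory Num.Theory.
Import numFieldNormedType.Exports.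
Local Open Scope ring_scope.

(* Write p_i = v_i^alpha, S = sum_i p_i and Q = sum_i p_i^2, so that
   H = S^2 - Q, (A v^alpha)_i = S - p_i and F_i = -v_i + p_i (S - p_i) / (S^2 - Q).
   At the center every p_i has the same derivative, so dS and dQ are multiples
   of sum_i h_i and vanish on tangent vectors.  Hence DF(v) is
   lambda Id + mu (1 1^T) with lambda = -1 + alpha (N - 2) / (N - 1): on the
   tangent space it is multiplication by lambda, its only eigenvalue there, and
   lambda < 0 exactly when alpha < (N - 1) / (N - 2). *)

Section DifferentialRules.
Context {R : realType} {V W : normedModType R}.

Lemma is_diffV {f df : V -> R} {x} : is_diff x f df -> f x != 0 ->
  is_diff x (fun y => (f y)^-1) (fun h => - (f x) ^- 2 * df h).
Proof.
move=> dfx fx0; apply: DiffDef; first exact: differentiableV.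
by rewrite diffV // diff_val.
Qed.

Lemma is_diff_sum n (f df : 'I_n -> V -> W) x :
  (forall i, is_diff x (f i) (df i)) ->
  is_diff x (fun y => \sum_(i < n) f i y) (fun h => \sum_(i < n) df i h).
Proof.
elim: n f df => [|n IHn] f df dfx.
  have -> : (fun y => \sum_(i < 0) f i y) = cst 0.
    by apply/funext => y; rewrite big_ord0.
  by apply: is_diff_eq; apply/funext => h; rewrite big_ord0.
have -> : (fun y => \sum_(i < n.+1) f i y) =
    (fun y => \sum_(i < n) f (widen_ord (leqnSn n) i) y + f ord_max y).
  by apply/funext => y; rewrite big_ord_recr.
have -> : (fun h => \sum_(i < n.+1) df i h) =
    (fun h => \sum_(i < n) df (widen_ord (leqnSn n) i) h + df ord_max h).
  by apply/funext => h; rewrite big_ord_recr.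
have := IHn (fun i => f (widen_ord (leqnSn n) i)) (fun i => df (widen_ord (leqnSn n) i)).
move=> /(_ (fun i => dfx _)) IH.
exact: is_diffD.
Qed.

Lemma is_diff_scalel (k dk : V -> R) (u : W) x : is_diff x k dk ->
  is_diff x (fun y => k y *: u) (fun h => dk h *: u).
Proof.
move=> dkx; apply: DiffDef; first exact: differentiableZl.
by rewrite diffZl // diff_val.
Qed.

End DifferentialRules.

Lemma is_diff_row {R : realType} {V : normedModType R} m
    (f : V -> 'rV[R]_m) (df : 'I_m -> V -> R) x :
  (forall i, is_diff x (fun y => f y ord0 i) (df i)) ->
  is_diff x f (fun h => \row_i df i h).
Proof.
move=> dfx; have -> : f = fun y => \sum_(i < m) f y ord0 i *: (delta_mx ord0 i : 'rV_m).
  by apply/funext => y; exact: row_sum_delta.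
apply: is_diff_eq; first by apply: is_diff_sum => i; exact: is_diff_scalel.
by apply/funext => h; rewrite [RHS]row_sum_delta; apply: eq_bigr => i _; rewrite mxE.
Qed.

Lemma is_diff_coord {R : realType} {m n} (M : 'M[R]_(m, n)) i j :
  is_diff M (fun A : 'M[R]_(m, n) => A i j) (fun A => A i j).
Proof.
have @coord : {linear 'M[R]_(m, n) -> R}.
  by exists (fun A : 'M[R]_(_, _) => A i j); do 2![eexists]; do ?[constructor];
     rewrite ?mxE// => ? *; rewrite ?mxE//; move=> ?; rewrite !mxE.
rewrite (_ : (fun _ => _) = coord) //; apply: DiffDef.
  exact/linear_differentiable/coord_continuous.
exact/diff_lin/coord_continuous.
Qed.

Lemma is_diff_powR {R : realType} (a x : R) : 0 < x ->
  is_diff x (fun t : R => t `^ a) (fun h => h * (a * x `^ (a - 1))).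
Proof.
move=> x0; have [dp <-] := is_derive1_powR a x0.
apply: DiffDef; first exact/derivable1_diffP.
by rewrite deriv1E // derive1E.
Qed.

Section SimplexCenter.
Variables (R : realType) (N : nat) (alpha : R).

Definition pow_sum (y : 'rV[R]_N) : R := \sum_(j < N) y ord0 j `^ alpha.
Definition pow_sqr_sum (y : 'rV[R]_N) : R := \sum_(j < N) (y ord0 j `^ alpha) ^+ 2.

Lemma sumr_neq (a : 'I_N -> R) i : \sum_(j < N | j != i) a j = \sum_(j < N) a j - a i.
Proof. by rewrite [X in _ = X - _](bigD1 i) //= addrC addrK. Qed.

Lemma Avpow_pow_sum y i : Avpow alpha y i = pow_sum y - y ord0 i `^ alpha.
Proof.
rewrite /Avpow /pow_sum (bigD1 i) //= !mxE eqxx mul0r add0r -sumr_neq.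
by apply: eq_bigr => j ji; rewrite !mxE eq_sym (negbTE ji) mul1r.
Qed.

Lemma Hf_pow_sum y : Hf alpha y = pow_sum y ^+ 2 - pow_sqr_sum y.
Proof.
transitivity (\sum_(i < N) (y ord0 i `^ alpha * pow_sum y - (y ord0 i `^ alpha) ^+ 2)).
  apply: eq_bigr => i _; rewrite sumr_neq mulr_sumr expr2 !mxE; congr (_ - _).
  by apply: eq_bigr => j _; rewrite !mxE.
by rewrite sumrB -mulr_suml -expr2.
Qed.

Lemma Fv_entry y i : Fv alpha y ord0 i = - y ord0 i +
  y ord0 i `^ alpha * (pow_sum y - y ord0 i `^ alpha) / (pow_sum y ^+ 2 - pow_sqr_sum y).
Proof. by rewrite /Fv /piv !mxE Avpow_pow_sum Hf_pow_sum. Qed.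

Lemma is_diff_pow_entry (y : 'rV[R]_N) j : 0 < y ord0 j ->
  is_diff y (fun z => z ord0 j `^ alpha)
    (fun h => h ord0 j * (alpha * y ord0 j `^ (alpha - 1))).
Proof.
move=> yj0; exact: (is_diff_comp (is_diff_coord y ord0 j) (is_diff_powR alpha _ yj0)).
Qed.

Let n : R := N%:R.
Let c := simplex_center R N.
Let w : R := n^-1 `^ alpha.
Let k : R := alpha * n^-1 `^ (alpha - 1).

Hypothesis N_gt1 : (1 < N)%N.

Let n_gt1 : 1 < n. Proof. by rewrite /n ltr1n. Qed.
Let n_gt0 : 0 < n. Proof. by have := n_gt1; lra. Qed.

Lemma simplex_center_entry j : c ord0 j = n^-1.
Proof. by rewrite mxE. Qed.

Let w_gt0 : 0 < w. Proof. by rewrite powR_gt0 // invr_gt0. Qed.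

Let k_center : k = alpha * n * w.
Proof.
rewrite /k /w powRB; last by apply/implyP => _; rewrite invr_eq0 gt_eqF.
rewrite powRr1 ?invrK; first ring.
by rewrite invr_ge0 ltW.
Qed.

Lemma pow_sum_center : pow_sum c = n * w.
Proof.
rewrite /pow_sum (eq_bigr (fun=> w)); first by rewrite sumr_const card_ord mulr_natl.
by move=> j _; rewrite simplex_center_entry.
Qed.

Lemma pow_sqr_sum_center : pow_sqr_sum c = n * w ^+ 2.
Proof.
rewrite /pow_sqr_sum (eq_bigr (fun=> w ^+ 2)); first by rewrite sumr_const card_ord mulr_natl.
by move=> j _; rewrite simplex_center_entry.
Qed.

Lemma is_diff_pow_entry_center j :
  is_diff c (fun y => y ord0 j `^ alpha) (fun h => h ord0 j * k).
Proof.
have := @is_diff_pow_entry c j; rewrite simplex_center_entry; apply.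
by rewrite invr_gt0.
Qed.

Lemma is_diff_pow_sum_center :
  is_diff c pow_sum (fun h => k * \sum_(j < N) h ord0 j).
Proof.
apply: is_diff_eq; first exact/is_diff_sum/is_diff_pow_entry_center.
by apply/funext => h; rewrite mulr_sumr; apply: eq_bigr => j _; rewrite mulrC.
Qed.

Lemma is_diff_pow_sqr_sum_center :
  is_diff c pow_sqr_sum (fun h => 2 * w * k * \sum_(j < N) h ord0 j).
Proof.
apply: is_diff_eq.
  by apply: is_diff_sum => j; exact: (is_diffX 1 (is_diff_pow_entry_center j)).
apply/funext => h; rewrite mulr_sumr; apply: eq_bigr => j _.
rewrite simplex_center_entry !fctE expr1 -[_ *: _]/(_ * _) -/w; ring.
Qed.

Let denom_center_neq0 : pow_sum c ^+ 2 - pow_sqr_sum c != 0.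
Proof.
rewrite pow_sum_center pow_sqr_sum_center (_ : _ - _ = n * (n - 1) * w ^+ 2); last by ring.
by rewrite !mulf_neq0 ?expf_neq0 ?gt_eqF // subr_gt0.
Qed.

Definition center_eigenvalue : R := -1 + alpha * (n - 2) / (n - 1).
Definition center_coupling : R := alpha * ((n - 1)^-1 - 2 / n).

Lemma is_diff_Fv_entry_center i :
  is_diff c (fun y => Fv alpha y ord0 i) (fun h =>
    center_eigenvalue * h ord0 i + center_coupling * \sum_(j < N) h ord0 j).
Proof.
have -> : (fun y => Fv alpha y ord0 i) = (fun y => - y ord0 i +
    y ord0 i `^ alpha * (pow_sum y - y ord0 i `^ alpha) / (pow_sum y ^+ 2 - pow_sqr_sum y)).
  by apply/funext => y; exact: Fv_entry.
have := is_diffX 1 is_diff_pow_sum_center; rewrite exprfctE => dS2.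
have := is_diffB dS2 is_diff_pow_sqr_sum_center; rewrite !fctE /= => dH.
have dinv := is_diffV dH denom_center_neq0.
have dentry := is_diff_coord c ord0 i.
have dpow := is_diff_pow_entry_center i.
have dsum := is_diff_pow_sum_center.
have := is_diffD (is_diffN dentry) (is_diffM (is_diffM dpow (is_diffB dsum dpow)) dinv).
rewrite !fctE /= => dF.
apply: is_diff_eq dF _.
apply/funext => h /=.
rewrite /GRing.scale /= !simplex_center_entry -/w pow_sum_center pow_sqr_sum_center k_center.
rewrite /center_eigenvalue /center_coupling.
field; rewrite -pow_sum_center -pow_sqr_sum_center denom_center_neq0 gt_eqF //= subr_eq0.
by rewrite eq_sym lt_eqF.
Qed.

Lemma is_diff_Fv_center : is_diff c (Fv alpha) (fun h =>
  center_eigenvalue *: h + (center_coupling * \sum_(j < N) h ord0 j) *: const_mx 1).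
Proof.
apply: is_diff_eq; first exact/is_diff_row/is_diff_Fv_entry_center.
by apply/funext => h; apply/rowP => i; rewrite !mxE mulr1.
Qed.

Lemma diff_Fv_center_tangent h :
  tangent h -> 'd (Fv alpha) c h = center_eigenvalue *: h.
Proof. by case: is_diff_Fv_center => _ -> th; rewrite th mulr0 scale0r addr0. Qed.

Lemma simplex_center_equilibrium : equilibrium alpha c.
Proof.
split; last first.
  apply/rowP => i; rewrite Fv_entry simplex_center_entry -/w pow_sum_center.
  rewrite pow_sqr_sum_center mxE; field.
  by rewrite -pow_sum_center -pow_sqr_sum_center denom_center_neq0 gt_eqF.
split; first by move=> i; rewrite simplex_center_entry invr_ge0 ltW.
split; last first.
  move=> i; rewrite simplex_center_entry invf_ple ?posrE // invf_div.
  have : 2 <= n by rewrite /n ler_nat.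
  lra.
rewrite (eq_bigr (fun=> n^-1)); last by move=> j _; exact: simplex_center_entry.
by rewrite sumr_const card_ord -mulr_natl mulfV ?gt_eqF.
Qed.

End SimplexCenter.

Section TangentSpectrum.
Context {R : realType} {N : nat} {L : 'rV[R]_N -> 'rV[R]_N} {lm : R}.
Hypothesis L_tangent : forall h, tangent h -> L h = lm *: h.

Lemma eigenvalue_tangent_scalar a b : eigenvalue_tangent L a b -> a = lm.
Proof.
case=> x [y [tx [ty [xy0 [Lx Ly]]]]]; rewrite !L_tangent // in Lx Ly.
have ex : (lm - a) *: x = - (b *: y) by rewrite scalerBl Lx addrAC subrr add0r.
have ey : (lm - a) *: y = b *: x by rewrite scalerBl Ly addrK.
set s := (lm - a) ^+ 2 + b ^+ 2.
have sx : s *: x = 0.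
  by rewrite scalerDl !expr2 -!scalerA ex -ey scalerN !scalerA [b * _]mulrC addNr.
have sy : s *: y = 0.
  by rewrite scalerDl !expr2 -!scalerA ey -[b *: y]opprK -ex scalerN !scalerA [b * _]mulrC subrr.
have s0 : s = 0.
  by case: xy0 => nz; apply/eqP; [move/eqP: sx | move/eqP: sy];
    rewrite scaler_eq0 (negbTE nz) orbF.
rewrite /s in s0; nra.
Qed.

Lemma tangent_delta_sub i j : tangent (delta_mx ord0 i - delta_mx ord0 j : 'rV[R]_N).
Proof.
have sum_delta k : \sum_(l < N) (delta_mx ord0 k : 'rV[R]_N) ord0 l = 1.
  rewrite (bigD1 k) //= mxE !eqxx big1 ?addr0 // => l /negbTE lk.
  by rewrite mxE lk andbF.
rewrite /tangent; under eq_bigr do rewrite mxE [X in _ + X]mxE.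
by rewrite sumrB sum_delta sum_delta subrr.
Qed.

Lemma eigenvalue_tangent_of_scalar : (1 < N)%N -> eigenvalue_tangent L lm 0.
Proof.
move=> N_gt1; pose i0 : 'I_N := Ordinal (ltnW N_gt1); pose i1 : 'I_N := Ordinal N_gt1.
have t0 : tangent (0 : 'rV[R]_N) by rewrite /tangent big1 // => l _; rewrite mxE.
exists (delta_mx ord0 i0 - delta_mx ord0 i1), 0; do !split => //.
- exact: tangent_delta_sub.
- left; apply/eqP => /rowP /(_ i0); rewrite !mxE !eqxx /= subr0.
  exact/eqP/oner_neq0.
- by rewrite L_tangent ?scaler0 ?subr0 //; exact: tangent_delta_sub.
- by rewrite L_tangent // scale0r add0r.
Qed.

End TangentSpectrum.

Section Threshold.
Variables (R : realType) (N : nat) (alpha : R).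
Hypothesis N_gt2 : (2 < N)%N.

Let n_gt2 : 2 < N%:R :> R. Proof. by rewrite ltr_nat. Qed.
Let n_sub2_gt0 : 0 < N%:R - 2 :> R. Proof. by rewrite subr_gt0. Qed.
Let n_sub1_gt0 : 0 < N%:R - 1 :> R. Proof. by have := n_gt2; lra. Qed.

Lemma center_eigenvalue_lt0 :
  (center_eigenvalue R N alpha < 0) = (alpha < (N%:R - 1) / (N%:R - 2)).
Proof.
by rewrite /center_eigenvalue addrC subr_lt0 ltr_pdivrMr // mul1r ltr_pdivlMr.
Qed.

Lemma center_eigenvalue_gt0 :
  (0 < center_eigenvalue R N alpha) = ((N%:R - 1) / (N%:R - 2) < alpha).
Proof.
by rewrite /center_eigenvalue addrC subr_gt0 ltr_pdivlMr // mul1r ltr_pdivrMr.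
Qed.

End Threshold.

Theorem lemma4p1 (R : realType) (N : nat) (alpha : R) :
  (3 <= N)%N -> 1 < alpha ->
  (alpha < (N%:R - 1) / (N%:R - 2) -> @linearly_stable R N alpha (simplex_center R N)) /\
  ((N%:R - 1) / (N%:R - 2) < alpha -> @linearly_unstable R N alpha (simplex_center R N)).
Proof.
move=> N_gt2 _; have N_gt1 : (1 < N)%N := ltnW N_gt2.
have equil := simplex_center_equilibrium R N alpha N_gt1.
have [diffF _] := is_diff_Fv_center R N alpha N_gt1.
have dF := diff_Fv_center_tangent R N alpha N_gt1.
split=> [stable | unstable]; do 2!split => //.
  by move=> a b /(eigenvalue_tangent_scalar dF) ->; rewrite center_eigenvalue_lt0.
exists (center_eigenvalue R N alpha), 0.
by rewrite center_eigenvalue_gt0 //; split => //; exact: eigenvalue_tangent_of_scalar dF N_gt1.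
Qed.
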